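(* Let $r\ge 2$ be an integer, $\tau_0>0$, $k_a\in(0,\tfrac12)$, and $$h_w> \frac{4\tau_0}{(1+r)(1+2k_a)}.$$ Then there exist $k_v>0$, $k_p>0$ such that for every $\tau\in[0,\tau_0]$, the polynomial $\tau s^3+s^2+(2k_v+(1+r)k_ph_w)s+2k_p$ is Hurwitz and $$2\sup_{\omega\in\mathbb{R}}|H_0(j\omega;\tau)|\le 1,\qquad H_0(s;\tau)=\frac{k_as^2+k_vs+k_p}{\tau s^3+s^2+(2k_v+(1+r)k_ph_w)s+2k_p}.$$ Consequently, for every $\tau\in[0,\tau_0]$ and $\omega\in\mathbb{R}$, all roots of $z^r-H_0(j\omega;\tau)z^{r-1}-H_0(j\omega;\tau)$ satisfy $|z|\le1$ (robust string stability).
   Context: Platoon of identical vehicles with dynamics $\ddot x_i=a_i$, $\tau\dot a_i+a_i=u_i$, parasitic lag $\tau\in[0,\tau_0]$, each vehicle using information from its immediate predecessor and its $r$-th predecessor via $u_i=\sum_{l\in\{1,r\}}\big[k_a a_{i-l}-k_v(v_i-v_{i-l})-k_p(x_i-x_{i-l}+d_l+l h_w v_i)\big]$ (equal gains for $l=1$ and $l=r$). With spacing errors $e_i=x_i-x_{i-1}+d+h_wv_i$, errors propagate as $E_i(s)=H_0(s)E_{i-1}(s)+H_0(s)E_{i-r}(s)$. *)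

(* The complex plane is modelled by an arbitrary
   numClosedFieldType C (e.g. algC, or the complex numbers); real numbers are
   the elements x with x \is Num.real, 'Re/'Im/'i are the usual notions. *)
From HB Require Import structures.
From mathcomp Require Import all_boot all_order all_algebra.
Set Implicit Arguments. Unset Strict Implicit. Unset Printing Implicit Defensive.
Import Order.TTheory GRing.Theory Num.Theory.
Local Open Scope ring_scope.

Definition den_poly (C : numClosedFieldType) (r : nat) (kv kp hw tau : C)
  : {poly C} :=
  tau *: 'X^3 + 'X^2 + (2 * kv + (1 + r%:R) * kp * hw) *: 'X + (2 * kp)%:P.

Definition num_poly (C : numClosedFieldType) (ka kv kp : C) : {poly C} :=
  ka *: 'X^2 + kv *: 'X + kp%:P.

Definition H0 (C : numClosedFieldType) (r : nat) (ka kv kp hw tau s : C) : C :=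
  (num_poly ka kv kp).[s] / (den_poly r kv kp hw tau).[s].

Definition hurwitz (C : numClosedFieldType) (p : {poly C}) : Prop :=
  p != 0 /\ forall z : C, root p z -> 'Re z < 0.

(* Write a = 2 kv + (1 + r) hw kp.  The cubic tau s^3 + s^2 + a s + 2 kp is
   Hurwitz as soon as 2 tau kp < a, and on the imaginary axis
   |den|^2 - 4 |num|^2 = w^2 ((tau w^2)^2 + w^2 (1 - 4 ka^2 - 2 a tau)
                              + (a^2 - 4 kv^2 - 4 kp (1 - 2 ka))),
   so 2 |H0| <= 1 once both brackets are nonnegative.  These three conditions
   only get weaker as tau decreases, so it suffices to meet them at tau0; the gains
   kv = (1 - 2 ka) / beta, kp = (1 - 2 ka) (1 + 2 ka - 4 tau0 / beta) / (4 tau0 beta),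
   with beta = (1 + r) hw, do so: the last bracket becomes (beta kp)^2.  If
   2 |h| <= 1, a root z with |z| > 1 of z^r - h z^(r-1) - h would give
   |z|^r <= (|z|^(r-1) + 1) / 2 < |z|^r. *)
From HB Require Import structures.
From mathcomp Require Import all_boot all_order all_algebra.
From mathcomp Require Import ring.
Set Implicit Arguments. Unset Strict Implicit. Unset Printing Implicit Defensive.
Import Order.TTheory GRing.Theory Num.Theory.
Local Open Scope ring_scope.

Lemma root_char_norm_le1 (C : numClosedFieldType) (r : nat) (h z : C) :
  (0 < r)%N -> 2 * `|h| <= 1 -> z ^+ r - h * z ^+ r.-1 - h = 0 -> `|z| <= 1.
Proof.
move=> r_gt0 h_small z_root.
rewrite real_leNgt ?real1 ?normr_real //; apply/negP => z_gt1.
have zr : z ^+ r = h * (z ^+ r.-1 + 1).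
  by apply/eqP; rewrite -subr_eq0 -{1}z_root; apply/eqP; ring.
set y := `|z| ^+ r.-1.
have y_ge1 : 1 <= y by rewrite exprn_ege1 // ltW.
have upper : 2 * `|z| ^+ r <= y + 1.
  rewrite -normrX zr normrM mulrA.
  apply: le_trans (ler_wpM2r _ h_small) _ => //.
  by rewrite mul1r (le_trans (ler_normD _ _)) // normrX normr1.
have lower : 2 * y < 2 * `|z| ^+ r.
  by rewrite -(prednK r_gt0) exprS ltr_pM2l // ltr_pMl // (lt_le_trans ltr01).
have y1_le : y + 1 <= 2 * y by rewrite mulr2n mulrDl mul1r lerD2l.
by have := lt_le_trans lower (le_trans upper y1_le); rewrite ltxx.
Qed.

Lemma hurwitz_cubic (C : numClosedFieldType) (t a b : C) :
  0 <= t -> 0 < b -> t * b < a -> hurwitz (t *: 'X^3 + 'X^2 + a *: 'X + b%:P).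
Proof.
move=> t_ge0 b_gt0 tb_lt_a.
set p := _ + b%:P.
have pE z : p.[z] = t * z ^+ 3 + z ^+ 2 + a * z + b by rewrite !hornerE.
have p0 : p.[0] = b by rewrite pE expr0n /= expr0n /= !mulr0 !add0r.
split=> [|z /rootP z_root].
  by apply: contraTneq b_gt0 => p_eq0; rewrite -p0 p_eq0 horner0 ltxx.
have z_neq0 : z != 0.
  apply: contraTneq b_gt0 => z0.
  by move: z_root; rewrite z0 p0 => ->; rewrite ltxx.
set d := a - t * b.
have d_gt0 : 0 < d by rewrite subr_gt0.
have t_real : t \is Num.real by apply: ger0_real.
have b_real : b \is Num.real by apply: gtr0_real.
have d_real : d \is Num.real by apply: gtr0_real.
rewrite real_ltNge ?Creal_Re ?real0 //; apply/negP => Re_ge0.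
(* p(z) = (z^2 + b)(t z + 1) + d z; multiplying by conj(z (t z + 1)) and
   taking real parts makes both summands nonnegative, the second positive. *)
set A := `|z| ^+ 2.
set m := `|t * z + 1| ^+ 2.
have conj_tz1 : (t * z + 1)^* = t * z^* + 1.
  by rewrite rmorphD rmorphM /= conj_Creal // conjC1.
have weighted : (z * A + b * z^*) * m + (d * A) * (t * z^* + 1) = 0.
  rewrite /m /A !normCK conj_tz1.
  have factored : (z ^+ 2 + b) * (t * z + 1) + d * z = 0.
    by rewrite -z_root pE /d; ring.
  rewrite -[RHS](mulr0 (z^* * (t * z^* + 1))) -factored; ring.
have A_real : A \is Num.real by rewrite rpredX ?normr_real.
have m_real : m \is Num.real by rewrite rpredX ?normr_real.
move/(congr1 (fun u => 'Re u)): weighted.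
rewrite raddfD /= ReMr // raddfD /= ReMr // ReMl // ReMl ?rpredM ?normr_real //.
rewrite raddfD /= ReMl // Re_conj (Creal_ReP _ (@real1 _)) raddf0.
have A_gt0 : 0 < A by rewrite exprn_gt0 // normr_gt0.
have first_ge0 : 0 <= ('Re z * A + b * 'Re z) * m.
  by rewrite mulr_ge0 ?exprn_ge0 // addr_ge0 // mulr_ge0 // ltW.
have second_gt0 : 0 < d * A * (t * 'Re z + 1).
  apply: mulr_gt0; first exact: mulr_gt0 d_gt0 A_gt0.
  by rewrite addrC ltr_wpDr // mulr_ge0.
by move=> sum0; have := ltr_wpDl first_ge0 second_gt0; rewrite sum0 ltxx.
Qed.

Section ImaginaryAxis.
Variable C : numClosedFieldType.

Lemma horner_quadratic_imag (c2 c1 c0 w : C) :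
  (c2 *: 'X^2 + c1 *: 'X + c0%:P).[w * 'i] = (c0 - c2 * w ^+ 2) + 'i * (c1 * w).
Proof.
rewrite !(hornerD, hornerZ, hornerXn, hornerX, hornerC).
move: (sqrCi C); move: 'i => j j2.
apply/eqP; rewrite -subr_eq0; apply/eqP.
by transitivity ((j ^+ 2 + 1) * (c2 * w ^+ 2)); [ring | rewrite j2 addNr mul0r].
Qed.

Lemma horner_cubic_imag (t a c w : C) :
  (t *: 'X^3 + 'X^2 + a *: 'X + c%:P).[w * 'i]
  = (c - w ^+ 2) + 'i * (a * w - t * w ^+ 3).
Proof.
rewrite !(hornerD, hornerZ, hornerXn, hornerX, hornerC).
move: (sqrCi C); move: 'i => j j2.
apply/eqP; rewrite -subr_eq0; apply/eqP.
transitivity ((j ^+ 2 + 1) * (t * w ^+ 3 * j + w ^+ 2)); first ring.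
by rewrite j2 addNr mul0r.
Qed.

Lemma norm_ratio_le_half (x y : C) : 2 * `|x| <= `|y| -> 2 * `|x / y| <= 1.
Proof.
have [-> _|y_neq0 le_xy] := eqVneq y 0.
  by rewrite invr0 mulr0 normr0 mulr0 ler01.
by rewrite normf_div mulrA ler_pdivrMr ?normr_gt0 // mul1r.
Qed.

Lemma transfer_norm_le_half_imag (t ka kv kp a w : C) :
  t \is Num.real -> ka \is Num.real -> kv \is Num.real -> kp \is Num.real ->
  a \is Num.real -> w \is Num.real ->
  0 <= 1 - 4 * ka ^+ 2 - 2 * a * t ->
  0 <= a ^+ 2 - 4 * kv ^+ 2 - 4 * kp * (1 - 2 * ka) ->
  2 * `|(ka *: 'X^2 + kv *: 'X + kp%:P).[w * 'i] /
        (t *: 'X^3 + 'X^2 + a *: 'X + (2 * kp)%:P).[w * 'i]| <= 1.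
Proof.
move=> t_real ka_real kv_real kp_real a_real w_real lag_ge0 gain_ge0.
apply: norm_ratio_le_half; rewrite horner_quadratic_imag horner_cubic_imag.
have w2_ge0 : 0 <= w ^+ 2 by rewrite real_exprn_even_ge0.
rewrite -ler_sqr ?nnegrE ?mulr_ge0 // exprMn.
rewrite !normC2_rect ?rpredB ?rpredM ?rpredX ?rpred_nat // -subr_ge0.
have -> : (2 * kp - w ^+ 2) ^+ 2 + (a * w - t * w ^+ 3) ^+ 2 -
          2 ^+ 2 * ((kp - ka * w ^+ 2) ^+ 2 + (kv * w) ^+ 2)
        = w ^+ 2 * ((t * w ^+ 2) ^+ 2 + w ^+ 2 * (1 - 4 * ka ^+ 2 - 2 * a * t)
                    + (a ^+ 2 - 4 * kv ^+ 2 - 4 * kp * (1 - 2 * ka))) by ring.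
rewrite mulr_ge0 // addr_ge0 // addr_ge0 ?(mulr_ge0 w2_ge0) //.
by rewrite real_exprn_even_ge0 // rpredM ?rpredX.
Qed.

End ImaginaryAxis.

Section GainChoice.
Variables (C : numClosedFieldType) (ka beta tau0 : C).
Hypotheses (tau0_gt0 : 0 < tau0) (ka_gt0 : 0 < ka) (ka_lt_half : 2 * ka < 1).
Hypothesis beta_large : 4 * tau0 < beta * (1 + 2 * ka).

Definition gain_kv : C := (1 - 2 * ka) / beta.
Definition gain_kp : C :=
  (1 - 2 * ka) * (1 + 2 * ka - 4 * tau0 / beta) / (4 * tau0 * beta).
Definition gain_lin_coef : C := 2 * gain_kv + beta * gain_kp.

Let eta_gt0 : 0 < 1 + 2 * ka. Proof. by rewrite addr_gt0 ?mulr_gt0. Qed.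
Let eps_gt0 : 0 < 1 - 2 * ka. Proof. by rewrite subr_gt0. Qed.

Let beta_gt0 : 0 < beta.
Proof.
rewrite -(pmulr_lgt0 beta eta_gt0); apply: lt_trans beta_large.
by rewrite mulr_gt0 ?ltr0n.
Qed.

Let margin_gt0 : 0 < 1 + 2 * ka - 4 * tau0 / beta.
Proof. by rewrite subr_gt0 ltr_pdivrMr // [_ * beta]mulrC. Qed.

Lemma gain_kv_gt0 : 0 < gain_kv.
Proof. exact: divr_gt0. Qed.

Lemma gain_kp_gt0 : 0 < gain_kp.
Proof. by rewrite divr_gt0 ?mulr_gt0. Qed.

Lemma gain_discriminantE :
  gain_lin_coef ^+ 2 - 4 * gain_kv ^+ 2 - 4 * gain_kp * (1 - 2 * ka)
  = (beta * gain_kp) ^+ 2.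
Proof.
rewrite /gain_lin_coef /gain_kv /gain_kp; field.
by rewrite !gt_eqF.
Qed.

Lemma gain_lag_marginE :
  1 - 4 * ka ^+ 2 - 2 * gain_lin_coef * tau0
  = (1 - 2 * ka) * (1 + 2 * ka - 4 * tau0 / beta) / 2.
Proof.
rewrite /gain_lin_coef /gain_kv /gain_kp; field.
by rewrite !gt_eqF.
Qed.

Lemma gain_hurwitz_margin : tau0 * (2 * gain_kp) < gain_lin_coef.
Proof.
rewrite -subr_gt0.
have -> : gain_lin_coef - tau0 * (2 * gain_kp) = 2 * gain_kv
    + gain_kp * ((beta * (1 + 2 * ka) - 4 * tau0) + beta * (1 - 2 * ka)) / 2.
  by rewrite /gain_lin_coef; field.
apply: addr_gt0; first by rewrite mulr_gt0 ?ltr0n ?gain_kv_gt0.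
by rewrite divr_gt0 ?ltr0n // mulr_gt0 ?gain_kp_gt0 // addr_gt0 ?mulr_gt0 // subr_gt0.
Qed.

Lemma gains_robust (tau : C) : 0 <= tau <= tau0 ->
  hurwitz (tau *: 'X^3 + 'X^2 + gain_lin_coef *: 'X + (2 * gain_kp)%:P) /\
  (forall w : C, w \is Num.real ->
     2 * `|(ka *: 'X^2 + gain_kv *: 'X + gain_kp%:P).[w * 'i] /
           (tau *: 'X^3 + 'X^2 + gain_lin_coef *: 'X + (2 * gain_kp)%:P).[w * 'i]|
     <= 1).
Proof.
move=> /andP[tau_ge0 tau_le_tau0].
have kp2_gt0 : 0 < 2 * gain_kp by rewrite mulr_gt0 ?ltr0n ?gain_kp_gt0.
have a_gt0 : 0 < gain_lin_coef.
  by apply: addr_gt0; apply: mulr_gt0; rewrite ?ltr0n ?gain_kv_gt0 ?gain_kp_gt0.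
split=> [|w w_real].
  apply: hurwitz_cubic => //; apply: le_lt_trans gain_hurwitz_margin.
  by rewrite ler_wpM2r // ltW.
apply: transfer_norm_le_half_imag => //;
  rewrite ?(ger0_real tau_ge0) ?gtr0_real ?gain_kv_gt0 ?gain_kp_gt0 //.
- have lag_tau0 : 0 <= 1 - 4 * ka ^+ 2 - 2 * gain_lin_coef * tau0.
    by rewrite gain_lag_marginE ltW // !divr_gt0 ?mulr_gt0 ?ltr0n.
  apply: le_trans lag_tau0 _.
  by rewrite lerD2l lerN2 ler_wpM2l // mulr_ge0 ?ler0n // ltW.
- by rewrite gain_discriminantE exprn_ge0 // ltW // mulr_gt0 ?gain_kp_gt0.
Qed.

End GainChoice.

Lemma den_polyE (C : numClosedFieldType) (r : nat) (kv kp hw tau : C) :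
  den_poly r kv kp hw tau
  = tau *: 'X^3 + 'X^2 + (2 * kv + (1 + r%:R) * hw * kp) *: 'X + (2 * kp)%:P.
Proof. by rewrite /den_poly mulrAC. Qed.

Theorem corollary1 (C : numClosedFieldType) (r : nat) (tau0 ka hw : C) :
  (2 <= r)%N -> 0 < tau0 -> 0 < ka -> ka < 2^-1 ->
  4 * tau0 / ((1 + r%:R) * (1 + 2 * ka)) < hw ->
  exists kv kp : C, 0 < kv /\ 0 < kp /\
    (forall tau : C, 0 <= tau <= tau0 ->
       hurwitz (den_poly r kv kp hw tau) /\
       (forall w : C, w \is Num.real ->
          2 * `|H0 r ka kv kp hw tau (w * 'i)| <= 1)) /\
    (forall tau w z : C, 0 <= tau <= tau0 -> w \is Num.real ->
       let h := H0 r ka kv kp hw tau (w * 'i) in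
       z ^+ r - h * z ^+ r.-1 - h = 0 -> `|z| <= 1).
Proof.
move=> r_ge2 tau0_gt0 ka_gt0 ka_lt_half hw_large.
set beta := (1 + r%:R) * hw.
have two_ka_lt1 : 2 * ka < 1.
  by move: ka_lt_half; rewrite -(@ltr_pM2l _ 2) ?ltr0n // mulfV ?pnatr_eq0.
have beta_large : 4 * tau0 < beta * (1 + 2 * ka).
  have r1_gt0 : 0 < 1 + r%:R :> C by rewrite (lt_le_trans ltr01) // lerDl ler0n.
  have eta_gt0 : 0 < 1 + 2 * ka by rewrite addr_gt0 // mulr_gt0 ?ltr0n.
  rewrite ltr_pdivrMr ?mulr_gt0 // in hw_large.
  by rewrite /beta mulrAC [_ * hw]mulrC.
have robust := gains_robust tau0_gt0 ka_gt0 two_ka_lt1 beta_large.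
have stable tau : 0 <= tau <= tau0 ->
    hurwitz (den_poly r (gain_kv ka beta) (gain_kp ka beta tau0) hw tau) /\
    (forall w : C, w \is Num.real ->
       2 * `|H0 r ka (gain_kv ka beta) (gain_kp ka beta tau0) hw tau (w * 'i)| <= 1).
  by rewrite /H0 /num_poly den_polyE; exact: robust.
exists (gain_kv ka beta), (gain_kp ka beta tau0).
split; first exact: gain_kv_gt0 tau0_gt0 ka_gt0 two_ka_lt1 beta_large.
split; first exact: gain_kp_gt0 tau0_gt0 ka_gt0 two_ka_lt1 beta_large.
split; first exact: stable.
move=> tau w z tau_range w_real h.
apply: root_char_norm_le1; first exact: leq_trans r_ge2.
exact: (stable tau tau_range).2 w w_real.
Qed.
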